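(* Assume the standing setup below. Then for all $r>0$ and all $t\ge2$, $$\log g(r^t)\ge t\log g(r).$$
   Context: Standing setup: $(\delta_n)_{n\in\mathbb N}$ is a sequence with $0<\delta_n<1/2$; $(a_n)_{n\in\mathbb N}$ is a positive strictly increasing sequence; $p_n=\lfloor a_n^{\delta_n/4}/4\rfloor$; and for all $n\in\mathbb N$: (C1) $a_1^{\delta_1/4}\ge4$, $a_{n+1}>a_n^2$, and $a_{n+1}^{\delta_{n+1}/2}>16a_n^{\delta_n}$; (C2) $a_{n+1}^{\delta_{n+1}/16}>a_n^{\delta_n}\log a_{n+1}$. The function $g:[0,\infty)\to[0,\infty)$ is defined by $g(r)=r^3$ for $0\le r<a_1$ and $g(r)=r^3\prod_{n:\,a_n\le r}(1+r/a_n)^{2p_n}$ for $r\ge a_1$. *)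

From Stdlib Require Import Reals ZArith ClassicalEpsilon.
Open Scope R_scope.

Definition pn (a delta : nat -> R) (n : nat) : Z :=
  Int_part (Rpower (a n) (delta n / 4) / 4).

Definition gfactor (a delta : nat -> R) (r : R) (n : nat) : R :=
  if Rle_dec (a n) r then Rpower (1 + r / a n) (2 * IZR (pn a delta n)) else 1.

Fixpoint gprod (a delta : nat -> R) (r : R) (N : nat) : R :=
  match N with
  | O => 1
  | S m => gprod a delta r m * gfactor a delta r (S m)
  end.

(* A cutoff N such that a_m > r for all m > N (exists since a_n -> infinity
   under the standing hypotheses); chosen by classical choice, default 0. *)
Definition gcut (a : nat -> R) (r : R) : nat :=
  epsilon (inhabits 0%nat) (fun N => forall m, (N < m)%nat -> r < a m).

(* g(r) = r^3 * prod_{n : a_n <= r} (1 + r/a_n)^(2 p_n)  (empty product if r < a_1) *)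
Definition g (a delta : nat -> R) (r : R) : R :=
  r ^ 3 * gprod a delta r (gcut a r).

From Stdlib Require Import Reals Lra Lia ZArith ClassicalEpsilon.
Open Scope R_scope.

(* Write g(r) = r^3 * P(r), where P(r) is the product of the factors
   (1 + r/a_n)^(2 p_n) over the n with a_n <= r.  Since ln((r^t)^3) = t ln(r^3),
   it suffices to compare ln P(r^t) with t ln P(r), and this is done factor by
   factor on a common range 1..N of indices:
   - if a_n <= r, the elementary inequality  t ln(1 + r/a) <= ln(1 + r^t/a)
     holds as soon as r >= a and t ln 2 <= (t-1) ln a, which follows from
     a >= a_1 >= 2^16 and t >= 2;
   - if a_n > r, the factor at r is 1, and every factor at r^t is >= 1.
   The file first proves the real-analysis facts, then the inequality for the
   finite products, then the inequality for g under two abstract hypotheses on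
   (a_n) (all a_n >= 2^16, and a_n -> +oo, which makes the cut-off gcut of g
   meaningful), and finally checks that the standing conditions (C1) imply
   these two hypotheses. *)

Lemma ln_le x y : 0 < x -> x <= y -> ln x <= ln y.
Proof. intros Hx [Hxy | <-]; [left; apply ln_increasing |]; lra. Qed.

Lemma ln_nonneg x : 1 <= x -> 0 <= ln x.
Proof. intros Hx; rewrite <- ln_1; apply ln_le; lra. Qed.

(* Real powers are positive (Rpower x y is defined as exp (y ln x)). *)
Lemma Rpower_pos x y : 0 < Rpower x y.
Proof. apply exp_pos. Qed.

Lemma Rpower_ge_base r t : 1 <= r -> 1 <= t -> r <= Rpower r t.
Proof.
  intros Hr Ht. rewrite <- (Rpower_1 r) at 1 by lra. now apply Rle_Rpower.
Qed.

(* The core estimate: for r >= a > 0, ln(1 + r/a) <= ln(2r/a), while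
   ln(1 + r^t/a) >= t ln r - ln a; the gap is closed by t ln 2 <= (t-1) ln a. *)
Lemma ln_one_plus_ratio_power a r t :
  0 < a -> a <= r -> 0 <= t -> t * ln 2 <= (t - 1) * ln a ->
  t * ln (1 + r / a) <= ln (1 + Rpower r t / a).
Proof.
  intros Ha Har Ht Hgap.
  assert (Hr : 0 < r) by lra.
  assert (Hratio : 1 <= r / a)
    by (apply (Rmult_le_reg_r a); [lra | field_simplify; lra]).
  assert (Hupper : ln (1 + r / a) <= ln 2 + ln r - ln a).
  { replace (ln 2 + ln r - ln a) with (ln (2 * (r * / a))).
    - apply ln_le; unfold Rdiv in *; lra.
    - assert (0 < / a) by (apply Rinv_0_lt_compat; lra).
      rewrite !ln_mult, ln_Rinv; try lra; apply Rmult_lt_0_compat; lra. }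
  assert (Hlower : t * ln r - ln a <= ln (1 + Rpower r t / a)).
  { replace (t * ln r - ln a) with (ln (Rpower r t * / a)).
    - apply ln_le; [apply Rmult_lt_0_compat; [apply Rpower_pos | apply Rinv_0_lt_compat; lra] |].
      unfold Rdiv; lra.
    - rewrite ln_mult, ln_Rinv, ln_Rpower; [lra | lra | apply Rpower_pos | apply Rinv_0_lt_compat; lra]. }
  apply Rmult_le_compat_l with (r := t) in Hupper; [nra | lra].
Qed.

Lemma exponent_gap a t : 16 * ln 2 <= ln a -> 2 <= t -> t * ln 2 <= (t - 1) * ln a.
Proof.
  intros Ha Ht. pose proof ln_lt_2.
  apply Rle_trans with ((t - 1) * (16 * ln 2)); [nra | apply Rmult_le_compat_l; lra].
Qed.

Lemma unit_steps_lower_bound (u : nat -> R) :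
  (forall n, (1 <= n)%nat -> u n + 1 <= u (S n)) ->
  forall n, (1 <= n)%nat -> u 1%nat + INR (n - 1) <= u n.
Proof.
  intros Hstep n Hn. induction n as [| n IH]; [lia |].
  destruct n as [| n]; [simpl; lra |].
  specialize (IH ltac:(lia)). specialize (Hstep (S n) ltac:(lia)).
  replace (S (S n) - 1)%nat with (S (S n - 1)) by lia. rewrite S_INR. lra.
Qed.

Lemma pn_nonneg a delta n : 0 <= IZR (pn a delta n).
Proof.
  unfold pn. set (x := Rpower (a n) (delta n / 4) / 4).
  assert (0 < x) by (unfold x; pose proof (Rpower_pos (a n) (delta n / 4)); lra).
  destruct (base_Int_part x) as [_ Hfloor].
  apply IZR_le. cut (-1 < Int_part x)%Z; [lia |].
  apply lt_IZR; simpl; lra.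
Qed.

Lemma gfactor_pos a delta r n : 0 < gfactor a delta r n.
Proof. unfold gfactor; destruct Rle_dec; [apply Rpower_pos | lra]. Qed.

Lemma gprod_pos a delta r N : 0 < gprod a delta r N.
Proof.
  induction N; simpl; [lra |].
  apply Rmult_lt_0_compat; [assumption | apply gfactor_pos].
Qed.

Lemma ln_gfactor_nonneg a delta s n : 0 < a n -> 0 <= s -> 0 <= ln (gfactor a delta s n).
Proof.
  intros Ha Hs. unfold gfactor. destruct Rle_dec; [| rewrite ln_1; lra].
  rewrite ln_Rpower. apply Rmult_le_pos.
  - pose proof (pn_nonneg a delta n); lra.
  - apply ln_nonneg.
    assert (0 <= s / a n)
      by (apply Rmult_le_pos; [lra | left; apply Rinv_0_lt_compat; lra]).
    lra.
Qed.

Lemma gprod_stable a delta r N M :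
  (forall m, (N < m)%nat -> r < a m) -> (N <= M)%nat ->
  gprod a delta r M = gprod a delta r N.
Proof.
  intros Hbig HNM. induction HNM as [| M HNM IH]; [reflexivity |].
  simpl. rewrite IH. unfold gfactor.
  destruct Rle_dec as [Hle |]; [| lra].
  specialize (Hbig (S M) ltac:(lia)). lra.
Qed.

Section GrowthInequality.

Variables a delta : nat -> R.
Hypothesis Hpos : forall n, (1 <= n)%nat -> 0 < a n.
Hypothesis Hlarge : forall n, (1 <= n)%nat -> 16 * ln 2 <= ln (a n).
Hypothesis Hunbounded : forall r, 0 < r -> exists N, forall m, (N < m)%nat -> r < a m.

(* a_n >= 2^16 forces a_n > 1, hence r^t >= r whenever r >= a_n. *)
Lemma a_gt_1 n : (1 <= n)%nat -> 1 < a n.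
Proof.
  intros Hn. pose proof (Hlarge n Hn). pose proof ln_lt_2.
  apply ln_lt_inv; [lra | apply Hpos, Hn | rewrite ln_1; lra].
Qed.

Lemma gfactor_ln_ineq r t n : 0 < r -> 2 <= t -> (1 <= n)%nat ->
  t * ln (gfactor a delta r n) <= ln (gfactor a delta (Rpower r t) n).
Proof.
  intros Hr Ht Hn. pose proof (Hpos n Hn) as Han.
  unfold gfactor at 1. destruct (Rle_dec (a n) r) as [Hle | Hgt].
  - assert (Hrt : a n <= Rpower r t)
      by (pose proof (a_gt_1 n Hn); pose proof (Rpower_ge_base r t); lra).
    unfold gfactor. destruct Rle_dec as [_ |]; [| lra].
    rewrite !ln_Rpower.
    pose proof (ln_one_plus_ratio_power (a n) r t Han Hle ltac:(lra)
                  (exponent_gap (a n) t (Hlarge n Hn) Ht)) as Hcore.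
    pose proof (pn_nonneg a delta n).
    apply Rmult_le_compat_l with (r := 2 * IZR (pn a delta n)) in Hcore; lra.
  - rewrite ln_1, Rmult_0_r.
    apply ln_gfactor_nonneg; [lra | left; apply Rpower_pos].
Qed.

Lemma gprod_ln_ineq r t N : 0 < r -> 2 <= t ->
  t * ln (gprod a delta r N) <= ln (gprod a delta (Rpower r t) N).
Proof.
  intros Hr Ht. induction N as [| N IH]; simpl; [rewrite ln_1; lra |].
  rewrite !ln_mult by (apply gprod_pos || apply gfactor_pos).
  pose proof (gfactor_ln_ineq r t (S N) Hr Ht ltac:(lia)). lra.
Qed.

Lemma gcut_spec r : 0 < r -> forall m, (gcut a r < m)%nat -> r < a m.
Proof. intros Hr. unfold gcut. apply epsilon_spec, Hunbounded, Hr. Qed.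

Lemma g_as_gprod r N : 0 < r -> (gcut a r <= N)%nat ->
  g a delta r = r ^ 3 * gprod a delta r N.
Proof.
  intros Hr HN. unfold g. f_equal. symmetry.
  apply gprod_stable; [apply gcut_spec |]; assumption.
Qed.

(* The theorem under the abstract hypotheses: compare both values of g on a
   common range of indices past both cut-offs. *)
Theorem ln_g_superhomogeneous r t : 0 < r -> 2 <= t ->
  t * ln (g a delta r) <= ln (g a delta (Rpower r t)).
Proof.
  intros Hr Ht. pose proof (Rpower_pos r t) as Hrt.
  set (N := (gcut a r + gcut a (Rpower r t))%nat).
  rewrite (g_as_gprod r N), (g_as_gprod (Rpower r t) N) by (assumption || lia).
  rewrite !ln_mult by (apply gprod_pos || apply pow_lt; assumption).
  rewrite !ln_pow, ln_Rpower by assumption.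
  pose proof (gprod_ln_ineq r t N Hr Ht). simpl INR. lra.
Qed.

End GrowthInequality.

Section StandingConditions.

Variables a delta : nat -> R.
Hypothesis Hdelta : forall n, (1 <= n)%nat -> 0 < delta n < 1 / 2.
Hypothesis Hapos : forall n, (1 <= n)%nat -> 0 < a n.
Hypothesis HC1a : Rpower (a 1%nat) (delta 1%nat / 4) >= 4.
Hypothesis HC1b : forall n, (1 <= n)%nat -> a (S n) > (a n) ^ 2.

(* From a_1^(delta_1/4) >= 4 with delta_1 < 1/2: a_1 >= 4^8 = 2^16. *)
Lemma ln_a1_large : 16 * ln 2 <= ln (a 1%nat).
Proof.
  pose proof (Hdelta 1 (le_n _)) as Hd. pose proof ln_lt_2.
  assert (H4 : ln 4 <= ln (Rpower (a 1%nat) (delta 1%nat / 4))) by (apply ln_le; lra).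
  rewrite ln_Rpower in H4.
  replace 4 with (2 * 2) in H4 at 1 by lra. rewrite ln_mult in H4 by lra.
  nra.
Qed.

Lemma a_ge_2 n : (1 <= n)%nat -> 2 <= a n.
Proof.
  induction n as [| n IH]; intros Hn; [lia |]. destruct n as [| n].
  - destruct (Rle_lt_dec 2 (a 1%nat)) as [| Hlt]; [assumption |].
    pose proof ln_a1_large. pose proof ln_lt_2.
    pose proof (ln_increasing _ _ (Hapos 1 (le_n _)) Hlt). lra.
  - specialize (IH ltac:(lia)). pose proof (HC1b (S n) ltac:(lia)). simpl in *. nra.
Qed.

Lemma a_unit_step n : (1 <= n)%nat -> a n + 1 <= a (S n).
Proof.
  intros Hn. pose proof (a_ge_2 n Hn). pose proof (HC1b n Hn). simpl in *. nra.
Qed.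

Lemma a_large n : (1 <= n)%nat -> 16 * ln 2 <= ln (a n).
Proof.
  intros Hn. pose proof ln_a1_large.
  pose proof (unit_steps_lower_bound a a_unit_step n Hn). pose proof (pos_INR (n - 1)).
  apply Rle_trans with (ln (a 1%nat)); [assumption |].
  apply ln_le; [apply Hapos, le_n | lra].
Qed.

(* a_n >= n, so a_n exceeds any given r for all large n. *)
Lemma a_unbounded r : 0 < r -> exists N, forall m, (N < m)%nat -> r < a m.
Proof.
  intros Hr. destruct (archimed r) as [Hup _].
  exists (Z.to_nat (up r)). intros m Hm.
  assert (HupN : INR (Z.to_nat (up r)) = IZR (up r)).
  { rewrite INR_IZR_INZ, Z2Nat.id; [reflexivity |].
    apply le_IZR; simpl; lra. }
  pose proof (unit_steps_lower_bound a a_unit_step m ltac:(lia)) as Hlinear.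
  rewrite minus_INR in Hlinear by lia. change (INR 1) with 1 in Hlinear.
  apply lt_INR in Hm. pose proof (a_ge_2 1 (le_n _)). lra.
Qed.

End StandingConditions.

Theorem lemma3p5 (a delta : nat -> R)
  (Hdelta : forall n, (1 <= n)%nat -> 0 < delta n < 1 / 2)
  (Hapos : forall n, (1 <= n)%nat -> 0 < a n)
  (Hainc : forall n, (1 <= n)%nat -> a n < a (S n))
  (HC1a : Rpower (a 1%nat) (delta 1%nat / 4) >= 4)
  (HC1b : forall n, (1 <= n)%nat -> a (S n) > (a n) ^ 2)
  (HC1c : forall n, (1 <= n)%nat ->
     Rpower (a (S n)) (delta (S n) / 2) > 16 * Rpower (a n) (delta n))
  (HC2 : forall n, (1 <= n)%nat ->
     Rpower (a (S n)) (delta (S n) / 16) > Rpower (a n) (delta n) * ln (a (S n))) :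
  forall r t : R, 0 < r -> 2 <= t ->
    ln (g a delta (Rpower r t)) >= t * ln (g a delta r).
Proof.
  intros r t Hr Ht. apply Rle_ge.
  apply ln_g_superhomogeneous; [exact Hapos | | | exact Hr | exact Ht].
  - exact (a_large a delta Hdelta Hapos HC1a HC1b).
  - exact (a_unbounded a delta Hdelta Hapos HC1a HC1b).
Qed.
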